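(* Let $a<b$, $n\ge 1$, and let $\{(\tau_k,\omega_k)\}_{k=1}^{2n+1}$ be the nodes and weights of the Gaussian quadrature rule for $S^n_{5,1}$ on the uniform knot sequence $x_k=a+k(b-a)/n$. Then for every $f\in C^6[a,b]$ there is $\xi\in[a,b]$ such that $$\int_a^b f(t)\,dt-\sum_{k=1}^{2n+1}\omega_k f(\tau_k)=c_{2n+1,6}\,f^{(6)}(\xi),\qquad c_{2n+1,6}=\frac{(b-a)^7}{5040}-\frac1{720}\sum_{k=1}^{2n+1}\omega_k(\tau_k-a)^6,$$ and $c_{2n+1,6}>0$.
   Context: $S^n_{5,1}=\{f\in C^1[a,b]:\ f|_{(x_{k-1},x_k)}\text{ is a polynomial of degree}\le 5,\ k=1,\dots,n\}$. A Gaussian quadrature rule for $S^n_{5,1}$ is a rule with $2n+1$ distinct nodes in $[a,b]$ and positive weights that integrates every $f\in S^n_{5,1}$ exactly over $[a,b]$ ($2n+1$ being the minimal possible number of nodes). *)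

From Stdlib Require Import Reals.
Open Scope R_scope.

Definition knot (a b : R) (n k : nat) : R := a + INR k * (b - a) / INR n.

Definition C1 (f : R -> R) : Prop :=
  exists f' : R -> R, (forall x, derivable_pt_lim f x (f' x)) /\ continuity f'.

Definition Cm_derivs (m : nat) (f : R -> R) (d : nat -> R -> R) : Prop :=
  (forall x, d 0%nat x = f x) /\
  (forall k x, (k < m)%nat -> derivable_pt_lim (d k) x (d (S k) x)) /\
  continuity (d m).

Definition in_S51 (a b : R) (n : nat) (g : R -> R) : Prop :=
  C1 g /\
  forall k : nat, (1 <= k <= n)%nat ->
    exists c : nat -> R, forall t,
      knot a b n (k - 1) < t < knot a b n k ->
      g t = sum_f_R0 (fun i => c i * t ^ i) 5.

Definition quad_sum (m : nat) (tau w : nat -> R) (g : R -> R) : R :=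
  sum_f_R0 (fun k => w (S k) * g (tau (S k))) (m - 1).

Definition integral_is (g : R -> R) (a b I : R) : Prop :=
  exists pr : Riemann_integrable g a b, RiemannInt pr = I.

Definition gauss_rule_S51 (a b : R) (n : nat) (tau w : nat -> R) : Prop :=
  (forall i, (1 <= i <= 2 * n + 1)%nat -> a <= tau i <= b) /\
  (forall i j, (1 <= i <= 2 * n + 1)%nat -> (1 <= j <= 2 * n + 1)%nat ->
     i <> j -> tau i <> tau j) /\
  (forall i, (1 <= i <= 2 * n + 1)%nat -> 0 < w i) /\
  (forall g, in_S51 a b n g -> integral_is g a b (quad_sum (2 * n + 1) tau w g)).

Definition c_err (a b : R) (n : nat) (tau w : nat -> R) : R :=
  (b - a) ^ 7 / 5040 - / 720 * quad_sum (2 * n + 1) tau w (fun t => (t - a) ^ 6).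

(* Taylor's formula with integral remainder turns the quadrature error
   [E(f) = int_a^b f - Q f], which vanishes on polynomials of degree [<= 5], into
   [E(f) = int_a^b K(s) f^(6)(s) ds] with the Peano kernel
   [K(s) = (b - s)^6/720 - Q((. - s)_+^5)/120], and integrating [K] gives [c_(2n+1,6)].
   Since [Q] is exact on the truncated powers [(. - x_j)_+^p], [2 <= p <= 5], the kernel and its
   first three derivatives vanish at every knot [x_j].  Its fourth derivative
   [H(s) = (b - s)^2/2 - Q((. - s)_+)] is a quadratic with leading coefficient [1/2] between
   consecutive nodes, so [2n+1] nodes allow [H] at most [4n] zeros in [(a, b)] (and fewer if a
   node sits at [a]).  By Rolle each of the [n] knot intervals already contains four zeros of [H],
   so [K] has no zero inside a knot interval, [H] does not vanish at interior knots, and no node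
   is [a].  Near a knot [K] has the sign of [H] at that knot on both sides, and [K > 0] just
   right of [a]; hence [K >= 0] on [[a, b]] with a positive integral, and the mean value theorem
   for integrals produces [xi].  Below, [K] and [H] are [K 5] and [K 1] of one family. *)

From Coquelicot Require Import Coquelicot.
From Stdlib Require Import Reals Lra Lia List Sorted Factorial Classical Wf_nat.
Open Scope R_scope.

(** * Truncated powers *)

Definition pos_part (x : R) : R := Rmax 0 x.

Definition tpow (p : nat) (u : R) : R := pos_part u ^ p.

Lemma pos_part_id x : 0 <= x -> pos_part x = x.
Proof. intro; apply Rmax_right; lra. Qed.

Lemma pos_part_0 x : x <= 0 -> pos_part x = 0.
Proof. intro; apply Rmax_left; lra. Qed.

Lemma pos_part_bounds x : 0 <= pos_part x <= Rabs x.
Proof.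
  unfold pos_part, Rmax; destruct (Rle_dec 0 x).
  - rewrite Rabs_right; lra.
  - split; [lra | apply Rabs_pos].
Qed.

Lemma continuity_pos_part : continuity pos_part.
Proof.
  intro x; apply continuity_pt_ext with (fun x => (x + Rabs x) / 2).
  - intro y; destruct (Rle_dec 0 y).
    + rewrite pos_part_id, Rabs_right; lra.
    + rewrite pos_part_0, Rabs_left; lra.
  - apply continuity_pt_mult.
    + apply continuity_pt_plus; [apply derivable_continuous_pt, derivable_pt_id | apply Rcontinuity_abs].
    + apply continuity_const; intros ? ?; reflexivity.
Qed.

Lemma continuity_pow_comp (h : R -> R) k : continuity h -> continuity (fun x => h x ^ k).
Proof.
  intros Hh x; induction k as [| k IH]; simpl.
  - apply continuity_pt_const; intros ? ?; reflexivity.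
  - apply (continuity_pt_mult h (fun x => h x ^ k)); [apply Hh | exact IH].
Qed.

Lemma continuity_sub_const c : continuity (fun x => x - c).
Proof.
  intro x; apply derivable_continuous_pt; exists 1.
  apply is_derive_Reals; auto_derive; [exact I | ring].
Qed.

Lemma continuity_const_sub c : continuity (fun x => c - x).
Proof.
  intro x; apply derivable_continuous_pt; exists (-1).
  apply is_derive_Reals; auto_derive; [exact I | ring].
Qed.

Lemma tpow_id p u : 0 <= u -> tpow p u = u ^ p.
Proof. intro; unfold tpow; rewrite pos_part_id; auto. Qed.

Lemma tpow_0 p u : (1 <= p)%nat -> u <= 0 -> tpow p u = 0.
Proof. intros; unfold tpow; rewrite pos_part_0, pow_i by (lia || lra); reflexivity. Qed.

Lemma continuity_tpow p : continuity (tpow p).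
Proof. exact (continuity_pow_comp pos_part p continuity_pos_part). Qed.

Lemma continuity_tpow_comp p (h : R -> R) : continuity h -> continuity (fun x => tpow p (h x)).
Proof. intros Hh x; exact (continuity_pt_comp h (tpow p) x (Hh x) (continuity_tpow p (h x))). Qed.

Lemma derivable_pt_lim_tpow_0 m : derivable_pt_lim (tpow (S (S m))) 0 0.
Proof.
  intros eps Heps.
  assert (Hd : 0 < Rmin eps 1) by (apply Rmin_pos; lra).
  exists (mkposreal _ Hd); intros h Hh Hlt; simpl in Hlt.
  assert (Hh1 : Rabs h < 1) by (eapply Rlt_le_trans; [exact Hlt | apply Rmin_r]).
  assert (Hhe : Rabs h < eps) by (eapply Rlt_le_trans; [exact Hlt | apply Rmin_l]).
  assert (Hpos : 0 < Rabs h) by (apply Rabs_pos_lt; exact Hh).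
  destruct (pos_part_bounds h) as [Hp0 Hp1].
  assert (Hpow : pos_part h ^ S m <= Rabs h).
  { apply Rle_trans with (Rabs h ^ S m); [apply pow_incr; lra |].
    assert (Rabs h ^ m <= 1) by (rewrite <- (pow1 m); apply pow_incr; lra).
    simpl; nra. }
  unfold tpow; rewrite Rplus_0_l, (pos_part_0 0), pow_i by (lra || lia).
  replace ((pos_part h ^ S (S m) - 0) / h - 0) with (pos_part h * pos_part h ^ S m / h)
    by (simpl; field; exact Hh).
  unfold Rdiv; rewrite Rabs_mult, Rabs_mult, Rabs_inv, (Rabs_right (pos_part h)),
    (Rabs_right (pos_part h ^ S m)) by (apply Rle_ge; try apply pow_le; lra).
  apply Rle_lt_trans with (Rabs h * Rabs h * / Rabs h); [| field_simplify; lra].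
  apply Rmult_le_compat_r; [left; apply Rinv_0_lt_compat; lra |].
  apply Rmult_le_compat; try apply pow_le; lra.
Qed.

Lemma derivable_pt_lim_tpow m x :
  derivable_pt_lim (tpow (S (S m))) x (INR (S (S m)) * tpow (S m) x).
Proof.
  destruct (Rtotal_order x 0) as [Hx | [-> | Hx]].
  - rewrite tpow_0, Rmult_0_r by (lia || lra).
    apply derivable_pt_lim_locally_ext with (fun _ => 0) (x - 1) 0; [lra | |].
    + intros z Hz; rewrite tpow_0 by (lia || lra); reflexivity.
    + apply derivable_pt_lim_const.
  - rewrite tpow_0, Rmult_0_r by (lia || lra); apply derivable_pt_lim_tpow_0.
  - rewrite tpow_id by lra.
    apply derivable_pt_lim_locally_ext with (fun u => u ^ S (S m)) 0 (x + 1); [lra | |].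
    + intros z Hz; rewrite tpow_id by lra; reflexivity.
    + apply (derivable_pt_lim_pow x (S (S m))).
Qed.

Lemma derivable_pt_lim_tpow_comp m (h : R -> R) dh x :
  derivable_pt_lim h x dh ->
  derivable_pt_lim (fun x => tpow (S (S m)) (h x)) x (INR (S (S m)) * tpow (S m) (h x) * dh).
Proof.
  intro Hh; exact (derivable_pt_lim_comp h (tpow (S (S m))) x dh _ Hh (derivable_pt_lim_tpow m (h x))).
Qed.

Lemma is_RInt_FTC (F f : R -> R) a b :
  (forall x, derivable_pt_lim F x (f x)) -> continuity f -> is_RInt f a b (F b - F a).
Proof.
  intros Hd Hc; apply (is_RInt_derive F f a b).
  - intros x _; apply is_derive_Reals, Hd.
  - intros x _; apply continuity_pt_filterlim, Hc.
Qed.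

Lemma is_RInt_tpow_sub_const m a b c : a <= c <= b ->
  is_RInt (fun x => tpow (S m) (x - c)) a b ((b - c) ^ S (S m) / INR (S (S m))).
Proof.
  intro Hc; set (k := S (S m)).
  assert (Hk : INR k <> 0) by (apply not_0_INR; unfold k; lia).
  replace ((b - c) ^ k / INR k)
    with (/ INR k * tpow k (b - c) - / INR k * tpow k (a - c))
    by (unfold k; rewrite tpow_id, tpow_0 by (lia || lra); unfold Rdiv; ring).
  apply (is_RInt_FTC (fun x => / INR k * tpow k (x - c))).
  - intro x; replace (tpow (S m) (x - c)) with (/ INR k * (INR k * tpow (S m) (x - c) * 1))
      by (field; exact Hk).
    apply (derivable_pt_lim_scal (fun x => tpow k (x - c))),
      (derivable_pt_lim_tpow_comp m (fun x => x - c)).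
    apply is_derive_Reals; auto_derive; [exact I | ring].
  - apply continuity_tpow_comp, continuity_sub_const.
Qed.

Lemma is_RInt_tpow_const_sub m a b c : a <= c <= b ->
  is_RInt (fun s => tpow (S m) (c - s)) a b ((c - a) ^ S (S m) / INR (S (S m))).
Proof.
  intro Hc; set (k := S (S m)).
  assert (Hk : INR k <> 0) by (apply not_0_INR; unfold k; lia).
  replace ((c - a) ^ k / INR k)
    with (- / INR k * tpow k (c - b) - - / INR k * tpow k (c - a))
    by (unfold k; rewrite tpow_0, tpow_id by (lia || lra); unfold Rdiv; ring).
  apply (is_RInt_FTC (fun s => - / INR k * tpow k (c - s))).
  - intro x; replace (tpow (S m) (c - x)) with (- / INR k * (INR k * tpow (S m) (c - x) * -1))
      by (field; exact Hk).
    apply (derivable_pt_lim_scal (fun s => tpow k (c - s))),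
      (derivable_pt_lim_tpow_comp m (fun s => c - s)).
    apply is_derive_Reals; auto_derive; [exact I | ring].
  - apply continuity_tpow_comp, continuity_const_sub.
Qed.

Lemma pow_sub_poly5 p c : (p <= 5)%nat ->
  exists coef : nat -> R, forall t, (t - c) ^ p = sum_f_R0 (fun i => coef i * t ^ i) 5.
Proof.
  intro Hp; exists (fun i => if Nat.leb i p then C p i * (- c) ^ (p - i) else 0); intro t.
  unfold Rminus; rewrite binomial.
  assert (Hlow : forall i, (i <= p)%nat ->
            C p i * t ^ i * (- c) ^ (p - i)
            = (if Nat.leb i p then C p i * (- c) ^ (p - i) else 0) * t ^ i).
  { intros i Hi; rewrite (proj2 (Nat.leb_le i p) Hi); ring. }
  destruct (Nat.eq_dec p 5) as [-> | Hp5]; [apply sum_eq; exact Hlow |].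
  rewrite (tech2 _ p 5), (sum_eq _ _ p Hlow) by lia.
  match goal with |- _ = _ + sum_f_R0 ?F _ => rewrite (sum_eq F (fun _ => 0)) end.
  - rewrite sum_cte; ring.
  - intros i Hi; rewrite (proj2 (Nat.leb_gt (S p + i) p)) by lia; ring.
Qed.

Section Knots.

Variables (a b : R) (n : nat).
Hypothesis hab : a < b.
Hypothesis hn : (1 <= n)%nat.

Lemma knot_lt i j : (i < j)%nat -> knot a b n i < knot a b n j.
Proof.
  intro Hij; unfold knot; apply lt_INR in Hij.
  assert (0 < INR n) by (apply lt_0_INR; lia).
  apply Rplus_lt_compat_l; unfold Rdiv; rewrite !Rmult_assoc.
  apply Rmult_lt_compat_r; [| exact Hij].
  apply Rmult_lt_0_compat; [lra | apply Rinv_0_lt_compat; assumption].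
Qed.

Lemma knot_le i j : (i <= j)%nat -> knot a b n i <= knot a b n j.
Proof.
  intro Hij; destruct (Nat.eq_dec i j) as [-> | Hne]; [lra |].
  apply Rlt_le, knot_lt; lia.
Qed.

Lemma knot_0 : knot a b n 0 = a.
Proof. unfold knot; simpl; field; apply not_0_INR; lia. Qed.

Lemma knot_n : knot a b n n = b.
Proof. unfold knot; field; apply not_0_INR; lia. Qed.

Lemma knot_bounds j : (j <= n)%nat -> a <= knot a b n j <= b.
Proof.
  intro Hj; pose proof (knot_le 0 j ltac:(lia)); pose proof (knot_le j n Hj).
  rewrite knot_0 in *; rewrite knot_n in *; lra.
Qed.

Lemma knot_cover t : a <= t <= b ->
  exists j, (1 <= j <= n)%nat /\ knot a b n (j - 1) <= t <= knot a b n j.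
Proof.
  intro Ht.
  enough (H : forall m, (1 <= m <= n)%nat -> t <= knot a b n m ->
            exists j, (1 <= j <= m)%nat /\ knot a b n (j - 1) <= t <= knot a b n j).
  { destruct (H n) as [j [Hj Hjt]]; [lia | rewrite knot_n; lra |].
    exists j; split; [lia | exact Hjt]. }
  induction m as [| m IH]; intros Hm Htm; [lia |].
  destruct (Nat.eq_dec m 0) as [-> | Hm0].
  - exists 1%nat; simpl; rewrite knot_0; split; [lia | lra].
  - destruct (Rle_dec t (knot a b n m)) as [Hle | Hgt].
    + destruct (IH ltac:(lia) Hle) as [j [Hj Hjt]]; exists j; split; [lia | exact Hjt].
    + exists (S m); simpl; rewrite Nat.sub_0_r; split; [lia | lra].
Qed.

Lemma in_S51_poly p c : (p <= 5)%nat -> in_S51 a b n (fun x => (x - c) ^ p).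
Proof.
  intro Hp; split.
  - exists (fun x => INR p * (x - c) ^ pred p); split.
    + intro x; apply is_derive_Reals; auto_derive; [exact I | unfold Rminus; ring].
    + intro x; apply continuity_pt_mult; [apply continuity_pt_const; intros ? ?; reflexivity |].
      apply continuity_pow_comp, continuity_sub_const.
  - intros k _; destruct (pow_sub_poly5 p c Hp) as [coef Hcoef].
    exists coef; intros t _; apply Hcoef.
Qed.

Lemma in_S51_tpow m j : (S (S m) <= 5)%nat -> (j <= n)%nat ->
  in_S51 a b n (fun x => tpow (S (S m)) (x - knot a b n j)).
Proof.
  intros Hm Hj; split.
  - exists (fun x => INR (S (S m)) * tpow (S m) (x - knot a b n j) * 1); split.
    + intro x; apply (derivable_pt_lim_tpow_comp m (fun x => x - knot a b n j)).
      apply is_derive_Reals; auto_derive; [exact I | ring].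
    + intro x; apply continuity_pt_mult; [| apply continuity_pt_const; intros ? ?; reflexivity].
      apply continuity_pt_mult; [apply continuity_pt_const; intros ? ?; reflexivity |].
      apply continuity_tpow_comp, continuity_sub_const.
  - intros k Hk; destruct (Compare_dec.le_lt_dec j (k - 1)) as [Hjk | Hjk].
    + destruct (pow_sub_poly5 (S (S m)) (knot a b n j) Hm) as [coef Hcoef].
      exists coef; intros t Ht; rewrite <- Hcoef.
      assert (knot a b n j <= knot a b n (k - 1)) by (apply knot_le; exact Hjk).
      apply tpow_id; lra.
    + exists (fun _ => 0); intros t Ht.
      assert (knot a b n k <= knot a b n j) by (apply knot_le; lia).
      rewrite tpow_0 by (lia || lra); simpl; ring.
Qed.

End Knots.

Lemma StronglySorted_app_sep (l1 l2 : list R) (m : R) :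
  StronglySorted Rlt l1 -> StronglySorted Rlt l2 ->
  Forall (fun x => x < m) l1 -> Forall (fun y => m <= y) l2 ->
  StronglySorted Rlt (l1 ++ l2).
Proof.
  intros S1 S2 F1 F2; induction S1 as [| x l1 S1 IH Hx]; [exact S2 |].
  inversion F1 as [| ? ? Hxm F1']; subst.
  constructor; [exact (IH F1') |].
  apply Forall_app; split; [exact Hx |].
  eapply Forall_impl; [| exact F2]; cbv beta; intros; lra.
Qed.

Definition zeros_in (f : R -> R) (lo hi : R) (k : nat) : Prop :=
  exists l, StronglySorted Rlt l /\ length l = k /\ Forall (fun y => lo < y < hi /\ f y = 0) l.

Lemma zeros_in_nil f lo hi : zeros_in f lo hi 0.
Proof. exists nil; repeat constructor. Qed.

Lemma zeros_in_app f lo m hi k1 k2 : lo <= m <= hi ->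
  zeros_in f lo m k1 -> zeros_in f m hi k2 -> zeros_in f lo hi (k1 + k2).
Proof.
  intros Hm [l1 [S1 [L1 F1]]] [l2 [S2 [L2 F2]]].
  exists (l1 ++ l2); split; [|split].
  - apply StronglySorted_app_sep with m; [exact S1 | exact S2 | |];
      (eapply Forall_impl; [| eassumption]); cbv beta; intros; lra.
  - rewrite length_app; lia.
  - apply Forall_app; split; (eapply Forall_impl; [| eassumption]); cbv beta; intros; lra.
Qed.

Lemma zeros_in_app_zero f lo m hi k1 k2 : lo < m < hi -> f m = 0 ->
  zeros_in f lo m k1 -> zeros_in f m hi k2 -> zeros_in f lo hi (k1 + S k2).
Proof.
  intros Hm Hfm [l1 [S1 [L1 F1]]] [l2 [S2 [L2 F2]]].
  exists (l1 ++ m :: l2); split; [|split].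
  - apply StronglySorted_app_sep with m; [exact S1 | | |].
    + constructor; [exact S2 |]. eapply Forall_impl; [| exact F2]; cbv beta; intros; lra.
    + eapply Forall_impl; [| exact F1]; cbv beta; intros; lra.
    + constructor; [lra |]. eapply Forall_impl; [| exact F2]; cbv beta; intros; lra.
  - rewrite length_app; simpl; lia.
  - apply Forall_app; split; [| constructor; [split; [lra | exact Hfm] |]];
      (eapply Forall_impl; [| eassumption]); cbv beta; intros; lra.
Qed.

Lemma rolle_zero (f f' : R -> R) lo hi :
  (forall x, derivable_pt_lim f x (f' x)) -> lo < hi -> f lo = 0 -> f hi = 0 ->
  exists c, lo < c < hi /\ f' c = 0.
Proof.
  intros Hd Hlt Hlo Hhi.
  destruct (MVT_cor2 f f' lo hi Hlt (fun c _ => Hd c)) as [c [Hc Hin]].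
  exists c; split; [exact Hin |].
  rewrite Hlo, Hhi in Hc. apply Rmult_eq_reg_r with (hi - lo); lra.
Qed.

Lemma zeros_in_derive (f f' : R -> R) lo hi k :
  (forall x, derivable_pt_lim f x (f' x)) -> lo < hi -> f lo = 0 -> f hi = 0 ->
  zeros_in f lo hi k -> zeros_in f' lo hi (S k).
Proof.
  intros Hd Hlt Hlo Hhi [l [Hs [<- Hl]]].
  revert lo Hlt Hlo Hl; induction Hs as [| x l Hs IH Hx]; intros lo Hlt Hlo Hl.
  - destruct (rolle_zero f f' lo hi Hd Hlt Hlo Hhi) as [c [Hc Hc0]].
    exists (c :: nil); repeat constructor; lra.
  - inversion Hl as [| ? ? [Hxin Hx0] Hl']; subst.
    destruct (rolle_zero f f' lo x Hd ltac:(lra) Hlo Hx0) as [c [Hc Hc0]].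
    destruct (IH x ltac:(lra) Hx0) as [l' [Hs' [Hlen Hl'']]].
    { eapply Forall_impl; [| exact (Forall_and Hx Hl')]; cbv beta; intros y [? [? ?]]; lra. }
    exists (c :: l'); split; [|split].
    + constructor; [exact Hs' |]. eapply Forall_impl; [| exact Hl'']; cbv beta; intros; lra.
    + simpl; lia.
    + constructor; [lra |]. eapply Forall_impl; [| exact Hl'']; cbv beta; intros; lra.
Qed.

Lemma mvt_between (f f' : R -> R) c x :
  (forall y, derivable_pt_lim f y (f' y)) -> x <> c ->
  exists th, 0 < th < 1 /\ f x - f c = f' (c + th * (x - c)) * (x - c).
Proof.
  intros Hd Hxc.
  assert (Hxi : exists xi, (x < xi < c \/ c < xi < x) /\ f x - f c = f' xi * (x - c)).
  { destruct (Rdichotomy _ _ Hxc) as [Hlt | Hlt].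
    - destruct (MVT_cor2 f f' x c Hlt (fun y _ => Hd y)) as [xi [E Hin]].
      exists xi; split; [left; exact Hin | lra].
    - destruct (MVT_cor2 f f' c x Hlt (fun y _ => Hd y)) as [xi [E Hin]].
      exists xi; split; [right; exact Hin | lra]. }
  destruct Hxi as [xi [Hin E]].
  assert (Hx : x - c <> 0) by lra.
  exists ((xi - c) / (x - c)).
  replace (c + (xi - c) / (x - c) * (x - c)) with xi by (field; exact Hx).
  split; [| exact E].
  assert (Eth : (xi - c) / (x - c) * (x - c) = xi - c) by (field; exact Hx).
  destruct Hin; split; nra.
Qed.

(* [g m] is an [m]-fold primitive of [g 0] vanishing to order [m] at [c], so near [c] it has
   the sign of [(x - c)^m g 0]. *)
Lemma sign_near_flat_zero (g : nat -> R -> R) N c lo hi s :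
  (forall m x, (m < N)%nat -> derivable_pt_lim (g (S m)) x (g m x)) ->
  (forall m, (1 <= m <= N)%nat -> g m c = 0) ->
  lo <= c <= hi ->
  (forall x, lo < x < hi -> x <> c -> 0 < s * g 0%nat x) ->
  forall m x, (m <= N)%nat -> lo < x < hi -> x <> c -> 0 < s * (x - c) ^ m * g m x.
Proof.
  intros Hd Hc Hint H0; induction m as [| m IH]; intros x Hm Hx Hxc.
  - simpl; rewrite Rmult_1_r; exact (H0 x Hx Hxc).
  - destruct (mvt_between (g (S m)) (g m) c x (fun y => Hd m y ltac:(lia)) Hxc)
      as [th [Hth E]].
    rewrite (Hc (S m)) in E by lia.
    set (xi := c + th * (x - c)) in E.
    assert (Hxi : lo < xi < hi /\ xi <> c).
    { unfold xi; assert (0 < (x - c) * (x - c)) by (apply Rsqr_pos_lt; lra).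
      destruct (Rdichotomy _ _ Hxc); repeat split; nra. }
    assert (Hm' := IH xi ltac:(lia) (proj1 Hxi) (proj2 Hxi)).
    replace (xi - c) with (th * (x - c)) in Hm' by (unfold xi; ring).
    rewrite Rpow_mult_distr in Hm'.
    assert (Hthm : 0 < th ^ m) by (apply pow_lt; lra).
    assert (Hsq : 0 < (x - c) * (x - c)) by (apply Rsqr_pos_lt; lra).
    replace (g (S m) x) with (g m xi * (x - c)) by lra.
    replace (s * (x - c) ^ S m * (g m xi * (x - c)))
      with ((x - c) * (x - c) * (s * (x - c) ^ m * g m xi)) by (simpl; ring).
    apply Rmult_lt_0_compat; [exact Hsq |].
    apply Rmult_lt_reg_l with (th ^ m); [exact Hthm |]. nra.
Qed.

Lemma continuity_sign_near (f : R -> R) c : continuity_pt f c -> f c <> 0 ->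
  exists e, 0 < e /\ forall x, c - e < x < c + e -> 0 < f c * f x.
Proof.
  intros Hc Hfc.
  destruct (Hc (Rabs (f c)) (Rabs_pos_lt _ Hfc)) as [e [He Hx]].
  exists e; split; [exact He |]; intros x Hxe.
  destruct (Req_dec x c) as [-> | Hne]; [apply Rsqr_pos_lt, Hfc |].
  assert (Hd : Rabs (f x - f c) < Rabs (f c)).
  { apply (Hx x); split; [split; [exact I | auto] |].
    simpl; unfold R_dist; apply Rabs_def1; lra. }
  destruct (Rlt_dec 0 (f c)) as [Hp | Hn].
  - rewrite (Rabs_right (f c)) in Hd by lra; apply Rabs_def2 in Hd; nra.
  - rewrite (Rabs_left (f c)) in Hd by lra; apply Rabs_def2 in Hd; nra.
Qed.

Lemma pos_of_no_root (f : R -> R) p q t0 :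
  continuity f -> (forall t, p < t < q -> f t <> 0) -> p < t0 < q -> 0 < f t0 ->
  forall t, p < t < q -> 0 < f t.
Proof.
  intros Hc Hnz Ht0 Hf0 t Ht; apply Rnot_le_lt; intro Hle.
  assert (Hlt : f t < 0) by (destruct Hle as [Hlt | Heq]; [exact Hlt | exfalso; exact (Hnz t Ht Heq)]).
  destruct (IVT_gen f t t0 0 Hc) as [z [Hz Hz0]].
  - split; [apply Rle_trans with (f t); [apply Rmin_l | lra]
           | apply Rle_trans with (f t0); [lra | apply Rmax_r]].
  - apply (Hnz z); [| exact Hz0]; split.
    + apply Rlt_le_trans with (Rmin t t0); [apply Rmin_glb_lt; lra | apply Hz].
    + apply Rle_lt_trans with (Rmax t t0); [apply Hz | apply Rmax_lub_lt; lra].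
Qed.

Lemma finite_lower_bound_gt (u : nat -> R) lo N :
  (forall i, (1 <= i <= N)%nat -> lo < u i) ->
  exists s, lo < s /\ forall i, (1 <= i <= N)%nat -> s <= u i.
Proof.
  induction N as [| N IH]; intro Hu.
  - exists (lo + 1); split; [lra | intros; lia].
  - destruct IH as [s [Hs Hsu]]; [intros; apply Hu; lia |].
    exists (Rmin s (u (S N))); split.
    + apply Rmin_glb_lt; [exact Hs | apply Hu; lia].
    + intros i Hi; destruct (Nat.eq_dec i (S N)) as [-> | Hne]; [apply Rmin_r |].
      eapply Rle_trans; [apply Rmin_l | apply Hsu; lia].
Qed.

Lemma integral_mean_value (k g : R -> R) (a b c e : R) :
  a < b -> continuity k -> continuity g -> (forall x, a <= x <= b -> 0 <= k x) ->
  is_RInt k a b c -> 0 < c -> is_RInt (fun s => k s * g s) a b e ->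
  exists xi, a <= xi <= b /\ e = c * g xi.
Proof.
  intros hab Hk Hg Hk0 Ic Hc Ie.
  assert (Hgab : forall x, a <= x <= b -> continuity_pt g x) by (intros; apply Hg).
  destruct (continuity_ab_min g a b ltac:(lra) Hgab) as [xm [Hm Hxm]].
  destruct (continuity_ab_maj g a b ltac:(lra) Hgab) as [xM [HM HxM]].
  assert (Hlow : g xm * c <= e).
  { apply (is_RInt_le (fun s => g xm * k s) (fun s => k s * g s) a b); [lra | | exact Ie |].
    - exact (is_RInt_scal _ _ _ _ _ Ic).
    - intros x Hx; assert (0 <= k x) by (apply Hk0; lra); assert (g xm <= g x) by (apply Hm; lra).
      nra. }
  assert (Hup : e <= g xM * c).
  { apply (is_RInt_le (fun s => k s * g s) (fun s => g xM * k s) a b); [lra | exact Ie | |].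
    - exact (is_RInt_scal _ _ _ _ _ Ic).
    - intros x Hx; assert (0 <= k x) by (apply Hk0; lra); assert (g x <= g xM) by (apply HM; lra).
      nra. }
  assert (Hmean : g xm <= e / c <= g xM).
  { split; [apply Rmult_le_reg_r with c | apply Rmult_le_reg_r with c];
      try exact Hc; unfold Rdiv; rewrite Rmult_assoc, Rinv_l, Rmult_1_r; lra. }
  destruct (IVT_gen g xm xM (e / c) Hg) as [xi [Hxi Hgxi]].
  - split; [apply Rle_trans with (g xm); [apply Rmin_l | lra]
           | apply Rle_trans with (g xM); [lra | apply Rmax_r]].
  - exists xi; split.
    + split; [apply Rle_trans with (Rmin xm xM); [apply Rmin_glb; lra | apply Hxi]
             | apply Rle_trans with (Rmax xm xM); [apply Hxi | apply Rmax_lub; lra]].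
    + rewrite Hgxi; field; lra.
Qed.

(** * Taylor's formula with integral remainder *)

Definition taylor_tail (g : nat -> R -> R) (m : nat) (c s : R) : R :=
  sum_f_R0 (fun i => g i s * (c - s) ^ S i / INR (fact (S i))) m.

Lemma derivable_pt_lim_pow_fact c i s :
  derivable_pt_lim (fun s => (c - s) ^ S i / INR (fact (S i))) s (- ((c - s) ^ i / INR (fact i))).
Proof.
  apply is_derive_Reals; auto_derive; [exact I |].
  change (match i with 0%nat => 1 | S _ => INR i + 1 end) with (INR (S i)).
  change (fact i + i * fact i)%nat with (fact (S i)).
  rewrite fact_simpl, mult_INR; unfold Rminus; field.
  split; [apply INR_fact_neq_0 | apply not_0_INR; lia].
Qed.

Lemma derivable_pt_lim_taylor_term (u : R -> R) du c i s :
  derivable_pt_lim u s du ->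
  derivable_pt_lim (fun s => u s * (c - s) ^ S i / INR (fact (S i))) s
    (du * (c - s) ^ S i / INR (fact (S i)) - u s * (c - s) ^ i / INR (fact i)).
Proof.
  intro Hu.
  replace (du * (c - s) ^ S i / INR (fact (S i)) - u s * (c - s) ^ i / INR (fact i))
    with (du * ((c - s) ^ S i / INR (fact (S i))) + u s * - ((c - s) ^ i / INR (fact i)))
    by (unfold Rdiv; ring).
  apply (derivable_pt_lim_locally_ext
    (mult_fct u (fun s => (c - s) ^ S i / INR (fact (S i)))) _ s (s - 1) (s + 1)); [lra | |].
  - intros; unfold mult_fct, Rdiv; ring.
  - exact (derivable_pt_lim_mult _ _ _ _ _ Hu (derivable_pt_lim_pow_fact c i s)).
Qed.

Lemma derivable_pt_lim_taylor_tail (g : nat -> R -> R) m c s :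
  (forall i, (i <= m)%nat -> derivable_pt_lim (g i) s (g (S i) s)) ->
  derivable_pt_lim (taylor_tail g m c) s
    (g (S m) s * (c - s) ^ S m / INR (fact (S m)) - g 0%nat s).
Proof.
  intro Hd; induction m as [| m IH].
  - change (taylor_tail g 0 c) with (fun s => g 0%nat s * (c - s) ^ 1 / INR (fact 1)).
    replace (g 1%nat s * (c - s) ^ 1 / INR (fact 1) - g 0%nat s)
      with (g 1%nat s * (c - s) ^ 1 / INR (fact 1) - g 0%nat s * (c - s) ^ 0 / INR (fact 0))
      by (simpl; field).
    apply derivable_pt_lim_taylor_term, Hd; lia.
  - replace (g (S (S m)) s * (c - s) ^ S (S m) / INR (fact (S (S m))) - g 0%nat s)
      with ((g (S m) s * (c - s) ^ S m / INR (fact (S m)) - g 0%nat s)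
            + (g (S (S m)) s * (c - s) ^ S (S m) / INR (fact (S (S m)))
               - g (S m) s * (c - s) ^ S m / INR (fact (S m)))) by ring.
    apply (derivable_pt_lim_plus (taylor_tail g m c)
             (fun s => g (S m) s * (c - s) ^ S (S m) / INR (fact (S (S m))))).
    + apply IH; intros; apply Hd; lia.
    + apply derivable_pt_lim_taylor_term, Hd; lia.
Qed.

Lemma taylor_tail_at g m c : taylor_tail g m c c = 0.
Proof.
  unfold taylor_tail; rewrite (sum_eq _ (fun _ => 0)); [rewrite sum_cte; ring |].
  intros i _; rewrite Rminus_diag, pow_i by lia; unfold Rdiv; ring.
Qed.

Section TaylorIntegral.

Variables (g : nat -> R -> R) (m : nat).
Hypothesis Hg : forall i x, (i <= S m)%nat -> derivable_pt_lim (g i) x (g (S i) x).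
Hypothesis Hcont : continuity (g (S (S m))).

Lemma continuity_taylor_integrand c k :
  continuity (fun s => g (S (S m)) s * (c - s) ^ k / INR (fact k)).
Proof.
  intro s; apply continuity_pt_div; [| apply continuity_pt_const; intros ? ?; reflexivity
                                     | apply INR_fact_neq_0].
  apply continuity_pt_mult; [apply Hcont | apply continuity_pow_comp, continuity_const_sub].
Qed.

Lemma is_RInt_taylor_remainder a c :
  is_RInt (fun s => g (S (S m)) s * (c - s) ^ S m / INR (fact (S m))) a c
    (g 0%nat c - (g 0%nat a + taylor_tail (fun i => g (S i)) m c a)).
Proof.
  replace (g 0%nat c) with (g 0%nat c + taylor_tail (fun i => g (S i)) m c c)
    by (rewrite taylor_tail_at; ring).
  apply (is_RInt_FTC (fun s => g 0%nat s + taylor_tail (fun i => g (S i)) m c s));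
    [| apply continuity_taylor_integrand].
  intro s.
  replace (g (S (S m)) s * (c - s) ^ S m / INR (fact (S m)))
    with (g 1%nat s + (g (S (S m)) s * (c - s) ^ S m / INR (fact (S m)) - g 1%nat s)) by ring.
  apply (derivable_pt_lim_plus (g 0%nat) (taylor_tail (fun i => g (S i)) m c)).
  - apply Hg; lia.
  - apply (derivable_pt_lim_taylor_tail (fun i => g (S i))); intros; apply Hg; lia.
Qed.

(* Taylor's formula at [a] for a primitive of [g 0], evaluated at [b]. *)
Lemma is_RInt_taylor_primitive a b :
  is_RInt (fun s => g (S (S m)) s * (b - s) ^ S (S m) / INR (fact (S (S m))) - g 0%nat s) a b
    (- taylor_tail g (S m) b a).
Proof.
  replace (- taylor_tail g (S m) b a) with (taylor_tail g (S m) b b - taylor_tail g (S m) b a)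
    by (rewrite taylor_tail_at; ring).
  apply is_RInt_FTC.
  - intro s; apply derivable_pt_lim_taylor_tail; intros; apply Hg; lia.
  - intro s; apply continuity_pt_minus; [apply continuity_taylor_integrand |].
    apply derivable_continuous_pt; exists (g 1%nat s); apply Hg; lia.
Qed.

End TaylorIntegral.

Section Quadrature.

Variables (N : nat) (tau w : nat -> R).

Notation Q := (quad_sum (S N) tau w).

Lemma quad_sum_ext f g :
  (forall i, (1 <= i <= S N)%nat -> f (tau i) = g (tau i)) -> Q f = Q g.
Proof.
  intro E; unfold quad_sum; simpl Nat.sub.
  apply sum_eq; intros k Hk; rewrite E by lia; reflexivity.
Qed.

Lemma quad_sum_plus f g : Q (fun x => f x + g x) = Q f + Q g.
Proof. unfold quad_sum; rewrite <- plus_sum; apply sum_eq; intros; ring. Qed.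

Lemma quad_sum_scal c f : Q (fun x => c * f x) = c * Q f.
Proof. unfold quad_sum; rewrite scal_sum; apply sum_eq; intros; ring. Qed.

Lemma derivable_pt_lim_quad_sum (F F' : R -> R -> R) t :
  (forall i, (1 <= i <= S N)%nat -> derivable_pt_lim (F (tau i)) t (F' (tau i) t)) ->
  derivable_pt_lim (fun t => Q (fun x => F x t)) t (Q (fun x => F' x t)).
Proof.
  unfold quad_sum; simpl Nat.sub; intro Hd.
  enough (H : forall M, (M <= N)%nat ->
    derivable_pt_lim (fun t => sum_f_R0 (fun k => w (S k) * F (tau (S k)) t) M) t
      (sum_f_R0 (fun k => w (S k) * F' (tau (S k)) t) M)) by (apply H; lia).
  induction M as [| M IH]; intro HM; simpl sum_f_R0.
  - apply (derivable_pt_lim_scal (F (tau 1%nat))), Hd; lia.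
  - apply (derivable_pt_lim_plus (fun t => sum_f_R0 (fun k => w (S k) * F (tau (S k)) t) M)
             (fun t => w (S (S M)) * F (tau (S (S M))) t)); [apply IH; lia |].
    apply (derivable_pt_lim_scal (F (tau (S (S M))))), Hd; lia.
Qed.

Lemma continuity_quad_sum (F : R -> R -> R) :
  (forall i, (1 <= i <= S N)%nat -> continuity (F (tau i))) ->
  continuity (fun t => Q (fun x => F x t)).
Proof.
  intros Hc t; unfold quad_sum; simpl Nat.sub.
  enough (H : forall M, (M <= N)%nat ->
    continuity_pt (fun t => sum_f_R0 (fun k => w (S k) * F (tau (S k)) t) M) t)
    by (apply H; lia).
  induction M as [| M IH]; intro HM; simpl sum_f_R0.
  - apply (continuity_pt_scal (F (tau 1%nat))), Hc; lia.
  - apply (continuity_pt_plus (fun t => sum_f_R0 (fun k => w (S k) * F (tau (S k)) t) M)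
             (fun t => w (S (S M)) * F (tau (S (S M))) t)); [apply IH; lia |].
    apply (continuity_pt_scal (F (tau (S (S M))))), Hc; lia.
Qed.

Lemma is_RInt_quad_sum (F : R -> R -> R) (I : R -> R) a b :
  (forall i, (1 <= i <= S N)%nat -> is_RInt (F (tau i)) a b (I (tau i))) ->
  is_RInt (fun t => Q (fun x => F x t)) a b (Q I).
Proof.
  unfold quad_sum; simpl Nat.sub; intro HI.
  enough (H : forall M, (M <= N)%nat ->
    is_RInt (fun t => sum_f_R0 (fun k => w (S k) * F (tau (S k)) t) M) a b
      (sum_f_R0 (fun k => w (S k) * I (tau (S k))) M)) by (apply H; lia).
  induction M as [| M IH]; intro HM; simpl sum_f_R0.
  - apply (is_RInt_scal (F (tau 1%nat))), HI; lia.
  - apply (is_RInt_plus (fun t => sum_f_R0 (fun k => w (S k) * F (tau (S k)) t) M)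
             (fun t => w (S (S M)) * F (tau (S (S M))) t)); [apply IH; lia |].
    apply (is_RInt_scal (F (tau (S (S M))))), HI; lia.
Qed.

Lemma quad_sum_taylor_poly (g : nat -> R -> R) m a b :
  (forall p, (p <= S m)%nat -> Q (fun x => (x - a) ^ p) = (b - a) ^ S p / INR (S p)) ->
  Q (fun x => g 0%nat a + taylor_tail (fun i => g (S i)) m x a) = taylor_tail g (S m) b a.
Proof.
  intro Hmom; induction m as [| m IH].
  - rewrite (quad_sum_ext _ (fun x => g 0%nat a * (x - a) ^ 0 + g 1%nat a * (x - a) ^ 1))
      by (intros; unfold taylor_tail; simpl; field).
    rewrite quad_sum_plus, !quad_sum_scal, !Hmom by lia.
    unfold taylor_tail; simpl; field.
  - set (c := g (S (S m)) a / INR (fact (S (S m)))).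
    rewrite (quad_sum_ext _ (fun x => (g 0%nat a + taylor_tail (fun i => g (S i)) m x a)
                                    + c * (x - a) ^ S (S m)))
      by (intros; unfold taylor_tail, c; rewrite tech5; unfold Rdiv; ring).
    rewrite quad_sum_plus, quad_sum_scal, IH, Hmom by first [lia | intros; apply Hmom; lia].
    unfold taylor_tail, c; rewrite (tech5 _ (S m)).
    rewrite (fact_simpl (S (S m))), mult_INR; field.
    split; [apply INR_fact_neq_0 | apply not_0_INR; lia].
Qed.

End Quadrature.

(** * The Peano kernel of the rule *)

Section PeanoKernel.

Variables (a b : R) (n : nat) (tau w : nat -> R).
Hypothesis hab : a < b.
Hypothesis hn : (1 <= n)%nat.
Hypothesis Hnodes : forall i, (1 <= i <= S (2 * n))%nat -> a <= tau i <= b.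
Hypothesis Hmoment : forall p, (p <= 5)%nat ->
  quad_sum (S (2 * n)) tau w (fun x => (x - a) ^ p) = (b - a) ^ S p / INR (S p).
Hypothesis Hknot : forall j p, (j <= n)%nat -> (2 <= p <= 5)%nat ->
  quad_sum (S (2 * n)) tau w (fun x => tpow p (x - knot a b n j))
  = (b - knot a b n j) ^ S p / INR (S p).

Local Notation Q := (quad_sum (S (2 * n)) tau w).
Local Notation node i := (1 <= i <= S (2 * n))%nat.
Local Notation x_ := (knot a b n).

(* Up to the factor [(-1)^(p+1) / p!], [peano_kernel p t] is the quadrature error on
   [x |-> (x - t)_+^p]; the signs make each one the derivative of the next. *)
Definition peano_kernel (p : nat) (t : R) : R :=
  (-1) ^ S p * ((b - t) ^ S p / INR (fact (S p)) - / INR (fact p) * Q (fun x => tpow p (x - t))).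

Local Notation K := peano_kernel.

Lemma derivable_pt_lim_peano_kernel m t : derivable_pt_lim (K (S (S m))) t (K (S m) t).
Proof.
  assert (DQ : derivable_pt_lim (fun t => Q (fun x => tpow (S (S m)) (x - t))) t
                 (Q (fun x => INR (S (S m)) * tpow (S m) (x - t) * -1))).
  { apply (derivable_pt_lim_quad_sum _ _ _ (fun x t => tpow (S (S m)) (x - t))
             (fun x t => INR (S (S m)) * tpow (S m) (x - t) * -1)).
    intros i _; apply (derivable_pt_lim_tpow_comp m (fun t => tau i - t)).
    apply is_derive_Reals; auto_derive; [exact I | ring]. }
  rewrite (quad_sum_ext _ _ _ _ (fun x => - INR (S (S m)) * tpow (S m) (x - t))) in DQ
    by (intros; ring).
  rewrite quad_sum_scal in DQ.
  unfold peano_kernel.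
  replace ((-1) ^ S (S m) * ((b - t) ^ S (S m) / INR (fact (S (S m)))
             - / INR (fact (S m)) * Q (fun x => tpow (S m) (x - t))))
    with ((-1) ^ S (S (S m)) * (- ((b - t) ^ S (S m) / INR (fact (S (S m))))
             - / INR (fact (S (S m))) * (- INR (S (S m)) * Q (fun x => tpow (S m) (x - t)))))
    by (rewrite (fact_simpl (S m)), mult_INR; simpl pow; field;
        split; [apply INR_fact_neq_0 | apply not_0_INR; lia]).
  apply (derivable_pt_lim_scal (fun t => _ - _)).
  apply (derivable_pt_lim_minus (fun t => (b - t) ^ S (S (S m)) / INR (fact (S (S (S m))))));
    [apply derivable_pt_lim_pow_fact |].
  apply (derivable_pt_lim_scal (fun t => Q (fun x => tpow (S (S m)) (x - t)))); exact DQ.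
Qed.

Lemma continuity_peano_kernel p : continuity (K p).
Proof.
  intro t; unfold peano_kernel.
  apply continuity_pt_mult; [apply continuity_pt_const; intros ? ?; reflexivity |].
  apply continuity_pt_minus.
  - apply continuity_pt_div; [| apply continuity_pt_const; intros ? ?; reflexivity
                                | apply INR_fact_neq_0].
    apply continuity_pow_comp, continuity_const_sub.
  - apply (continuity_pt_scal (fun t => Q (fun x => tpow p (x - t)))).
    apply (continuity_quad_sum _ _ _ (fun x t => tpow p (x - t))).
    intros i _; apply continuity_tpow_comp, continuity_const_sub.
Qed.

Lemma peano_kernel_knot j p : (j <= n)%nat -> (2 <= p <= 5)%nat -> K p (x_ j) = 0.
Proof.
  intros Hj Hp; unfold peano_kernel; rewrite Hknot by assumption.
  rewrite (fact_simpl p), mult_INR; field.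
  split; first [apply INR_fact_neq_0 | apply not_0_INR; lia].
Qed.

Lemma K1_eq t : K 1 t = (b - t) ^ 2 / 2 - Q (fun x => tpow 1 (x - t)).
Proof. unfold peano_kernel; simpl; field. Qed.

Lemma K1_left t : (forall i, node i -> t <= tau i) -> K 1 t = (t - a) ^ 2 / 2.
Proof.
  intro Ht; rewrite K1_eq.
  rewrite (quad_sum_ext _ _ _ _ (fun x => (x - a) ^ 1 + (a - t) * (x - a) ^ 0))
    by (intros i Hi; rewrite tpow_id by (specialize (Ht i Hi); lra); ring).
  rewrite quad_sum_plus, quad_sum_scal, !Hmoment by lia; simpl; field.
Qed.

Lemma K1_right t : (forall i, node i -> tau i <= t) -> K 1 t = (b - t) ^ 2 / 2.
Proof.
  intro Ht; rewrite K1_eq.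
  rewrite (quad_sum_ext _ _ _ _ (fun x => 0 * (x - a) ^ 0))
    by (intros i Hi; rewrite tpow_0 by (lia || (specialize (Ht i Hi); lra)); ring).
  rewrite quad_sum_scal; ring.
Qed.

Lemma K1_quadratic r u : (forall i, node i -> tau i <= r \/ u <= tau i) ->
  exists A B, forall t, r <= t <= u -> K 1 t = (b - t) ^ 2 / 2 - A + B * t.
Proof.
  intro Hgap; set (chi := fun x => if Rle_dec u x then 1 else 0).
  exists (Q (fun x => chi x * x)), (Q chi); intros t Ht; rewrite K1_eq.
  rewrite (quad_sum_ext _ _ _ _ (fun x => chi x * x + - t * chi x)).
  - rewrite quad_sum_plus, quad_sum_scal; ring.
  - intros i Hi; unfold chi; destruct (Rle_dec u (tau i)).
    + rewrite tpow_id by lra; ring.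
    + rewrite tpow_0 by (lia || (destruct (Hgap i Hi); lra)); ring.
Qed.

Lemma K1_a : K 1 a = 0.
Proof. rewrite K1_left; [simpl; field |]. intros i Hi; apply Hnodes, Hi. Qed.

Lemma node_after_zero r : r < b -> K 1 r = 0 -> exists i, node i /\ r <= tau i.
Proof.
  intros Hr H0; apply NNPP; intro Hno.
  rewrite K1_right in H0.
  - assert (0 < (b - r) ^ 2) by (apply pow_lt; lra); lra.
  - intros i Hi; apply Rnot_lt_le; intro Hlt; apply Hno; exists i; split; [exact Hi | lra].
Qed.

Lemma node_before_zero r : a < r -> K 1 r = 0 -> exists i, node i /\ tau i < r.
Proof.
  intros Hr H0; apply NNPP; intro Hno.
  rewrite K1_left in H0.
  - assert (0 < (r - a) ^ 2) by (apply pow_lt; lra); lra.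
  - intros i Hi; apply Rnot_lt_le; intro Hlt; apply Hno; exists i; split; [exact Hi | lra].
Qed.

(* Between two nodes [K 1] is a quadratic with leading coefficient [1/2]: at most two zeros. *)
Lemma node_between_zeros r s u : r < s < u -> K 1 r = 0 -> K 1 s = 0 -> K 1 u = 0 ->
  exists i, node i /\ r < tau i < u.
Proof.
  intros Hrsu Hr Hs Hu; apply NNPP; intro Hno.
  destruct (K1_quadratic r u) as [A [B HAB]].
  { intros i Hi; destruct (Rle_dec (tau i) r) as [Hle | Hgt]; [left; exact Hle |].
    destruct (Rle_dec u (tau i)) as [Hge | Hlt]; [right; exact Hge |].
    exfalso; apply Hno; exists i; split; [exact Hi | lra]. }
  rewrite HAB in Hr, Hs, Hu by lra.
  assert (E1 : (s - r) * (2 * b - r - s - 2 * B) = 0).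
  { replace ((s - r) * (2 * b - r - s - 2 * B))
      with (2 * ((b - r) ^ 2 / 2 - A + B * r) - 2 * ((b - s) ^ 2 / 2 - A + B * s)) by field.
    rewrite Hr, Hs; ring. }
  assert (E2 : (u - s) * (2 * b - s - u - 2 * B) = 0).
  { replace ((u - s) * (2 * b - s - u - 2 * B))
      with (2 * ((b - s) ^ 2 / 2 - A + B * s) - 2 * ((b - u) ^ 2 / 2 - A + B * u)) by field.
    rewrite Hs, Hu; ring. }
  apply Rmult_integral in E1; apply Rmult_integral in E2; lra.
Qed.

Lemma NoDup_of_sorted_nodes (ks : list nat) : StronglySorted Rlt (map tau ks) -> NoDup ks.
Proof.
  induction ks as [| i ks IH]; intro Hs; constructor.
  - intro Hin; apply StronglySorted_inv in Hs as [_ Hlt].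
    rewrite Forall_forall in Hlt.
    exact (Rlt_irrefl _ (Hlt (tau i) (in_map tau ks i Hin))).
  - apply IH; apply StronglySorted_inv in Hs as [Hs _]; exact Hs.
Qed.

Lemma sorted_nodes_length (ks : list nat) :
  StronglySorted Rlt (map tau ks) -> Forall (fun i => node i) ks -> (length ks <= S (2 * n))%nat.
Proof.
  intros Hs Hk; apply Nat.le_trans with (length (seq 1 (S (2 * n)))); [| rewrite length_seq; lia].
  apply NoDup_incl_length; [exact (NoDup_of_sorted_nodes ks Hs) |].
  intros i Hi; apply in_seq; rewrite Forall_forall in Hk; specialize (Hk i Hi); lia.
Qed.

(* Zeros [z0 < z1 < ... < zm] of [K 1] below [b] force [(m+2)/2] distinct nodes [>= z0]:
   one in each of [(z0, z2), (z2, z4), ...] and one after the last zero. *)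
Lemma nodes_from_zeros l : forall r,
  StronglySorted Rlt (r :: l) -> Forall (fun x => x < b /\ K 1 x = 0) (r :: l) ->
  exists ks, (S (length l) <= 2 * length ks)%nat /\
    Forall (fun i => node i /\ r <= tau i) ks /\ StronglySorted Rlt (map tau ks).
Proof.
  induction l as [l IH] using (induction_ltof1 _ (@length R)); intros r Hs Hz.
  apply StronglySorted_inv in Hs as [Hs Hr]; inversion Hz as [| ? ? [Hrb Hr0] Hz']; subst.
  destruct l as [| s [| u l]].
  - destruct (node_after_zero r Hrb Hr0) as [i [Hi Hri]].
    exists (i :: nil); split; [simpl; lia |].
    split; [constructor; [split; assumption | constructor] | repeat constructor].
  - inversion Hr as [| ? ? Hrs _]; inversion Hz' as [| ? ? [Hsb Hs0] _]; subst.
    destruct (node_after_zero s Hsb Hs0) as [i [Hi Hsi]].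
    exists (i :: nil); split; [simpl; lia |].
    split; [constructor; [split; [assumption | lra] | constructor] | repeat constructor].
  - inversion Hr as [| ? ? Hrs Hr']; inversion Hr' as [| ? ? Hru _]; subst.
    inversion Hz' as [| ? ? [Hsb Hs0] Hz'']; inversion Hz'' as [| ? ? [Hub Hu0] _]; subst.
    apply StronglySorted_inv in Hs as [Hs Hsl]; inversion Hsl as [| ? ? Hsu _]; subst.
    destruct (node_between_zeros r s u ltac:(lra) Hr0 Hs0 Hu0) as [i [Hi Hiru]].
    destruct (IH l ltac:(unfold ltof; simpl; lia) u Hs Hz'') as [ks [Hlen [Hks Hsorted]]].
    exists (i :: ks); split; [simpl in *; lia |]; split.
    + constructor; [split; [exact Hi | lra] |].
      eapply Forall_impl; [| exact Hks]; cbv beta; intros k [? ?]; split; [assumption | lra].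
    + constructor; [exact Hsorted |]; apply Forall_map.
      eapply Forall_impl; [| exact Hks]; cbv beta; intros k [? ?]; lra.
Qed.

Lemma zeros_K1_le k : zeros_in (K 1) a b k -> (k <= 4 * n)%nat.
Proof.
  intros [[| r l] [Hs [Hlen Hz]]]; [simpl in Hlen; lia |].
  inversion Hz as [| ? ? [Hr Hr0] _]; subst.
  destruct (node_before_zero r (proj1 Hr) Hr0) as [i0 [Hi0 Hi0r]].
  destruct (nodes_from_zeros l r Hs) as [ks [Hlen [Hks Hsorted]]].
  { eapply Forall_impl; [| exact Hz]; cbv beta; intros x [[? ?] ?]; split; assumption. }
  enough (length (i0 :: ks) <= S (2 * n))%nat by (simpl in *; lia).
  apply sorted_nodes_length.
  - constructor; [exact Hsorted |]; apply Forall_map.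
    eapply Forall_impl; [| exact Hks]; cbv beta; intros k [? ?]; lra.
  - constructor; [exact Hi0 |]; eapply Forall_impl; [| exact Hks]; cbv beta; tauto.
Qed.

(* A node at [a] is one more node, and [a] itself is one more zero of [K 1]. *)
Lemma zeros_K1_lt_of_node_at_a i0 k : node i0 -> tau i0 = a ->
  zeros_in (K 1) a b k -> (k < 4 * n)%nat.
Proof.
  intros Hi0 Ha [l [Hs [Hlen Hz]]].
  apply Nat.nlt_ge; intro Hk; apply Nat.lt_nge in Hk; apply Hk.
  destruct l as [| z1 [| z2 l]]; [simpl in Hlen; lia | simpl in Hlen; lia |].
  destruct (Forall_inv Hz) as [Hz1 Hz10]; apply Forall_inv_tail in Hz.
  destruct (Forall_inv Hz) as [Hz2 Hz20]; apply Forall_inv_tail in Hz.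
  apply StronglySorted_inv in Hs as [Hs Hz1l]; assert (H12 := Forall_inv Hz1l).
  destruct (node_between_zeros a z1 z2 ltac:(lra) K1_a Hz10 Hz20) as [i1 [Hi1 Hi1a]].
  destruct (nodes_from_zeros l z2 Hs) as [ks [Hlen' [Hks Hsorted]]].
  { constructor; [split; [lra | assumption] |].
    eapply Forall_impl; [| exact Hz]; cbv beta; intros x [[? ?] ?]; split; assumption. }
  enough (length (i0 :: i1 :: ks) <= S (2 * n))%nat by (simpl in *; lia).
  apply sorted_nodes_length.
  - assert (Hks' : Forall (fun k => z2 <= tau k) ks)
      by (eapply Forall_impl; [| exact Hks]; cbv beta; tauto).
    simpl; constructor; [constructor; [exact Hsorted |] | constructor; [lra |]];
      apply Forall_map; (eapply Forall_impl; [| exact Hks']); cbv beta; intros; lra.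
  - repeat (constructor; [assumption |]); eapply Forall_impl; [| exact Hks]; cbv beta; tauto.
Qed.

Lemma K1_zeros_of_K5_zeros j k : (1 <= j <= n)%nat ->
  zeros_in (K 5) (x_ (j - 1)) (x_ j) k -> zeros_in (K 1) (x_ (j - 1)) (x_ j) (4 + k).
Proof.
  intros Hj Hz.
  assert (Hlt : x_ (j - 1) < x_ j) by (apply (knot_lt a b n hab hn); lia).
  do 4 (eapply zeros_in_derive; [intro; apply derivable_pt_lim_peano_kernel | exact Hlt
                                 | apply peano_kernel_knot; lia | apply peano_kernel_knot; lia |]).
  exact Hz.
Qed.

Lemma K1_zeros_between_knots i j : (i <= j <= n)%nat -> zeros_in (K 1) (x_ i) (x_ j) (4 * (j - i)).
Proof.
  induction j as [| j IH]; intro Hij.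
  - replace (4 * (0 - i))%nat with 0%nat by lia; apply zeros_in_nil.
  - destruct (Nat.eq_dec i (S j)) as [-> | Hne].
    + rewrite Nat.sub_diag; apply zeros_in_nil.
    + replace (4 * (S j - i))%nat with (4 * (j - i) + (4 + 0))%nat by lia.
      apply zeros_in_app with (x_ j).
      * split; apply (knot_le a b n hab hn); lia.
      * apply IH; lia.
      * replace j with (S j - 1)%nat at 1 by lia.
        apply K1_zeros_of_K5_zeros; [lia | apply zeros_in_nil].
Qed.

Lemma K5_no_root j t : (1 <= j <= n)%nat -> x_ (j - 1) < t < x_ j -> K 5 t <> 0.
Proof.
  intros Hj Ht H0.
  assert (Zmid : zeros_in (K 1) (x_ (j - 1)) (x_ j) (4 + 1)).
  { apply K1_zeros_of_K5_zeros; [exact Hj |].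
    exists (t :: nil); split; [repeat constructor | split; [reflexivity |]].
    constructor; [split; assumption | constructor]. }
  assert (Zleft := K1_zeros_between_knots 0 (j - 1) ltac:(lia)).
  assert (Zright := K1_zeros_between_knots j n ltac:(lia)).
  rewrite knot_0 in Zleft by assumption; rewrite knot_n in Zright by assumption.
  assert (Hk := knot_bounds a b n hab hn (j - 1) ltac:(lia)).
  assert (Hk' := knot_bounds a b n hab hn j ltac:(lia)).
  assert (Hlt : x_ (j - 1) <= x_ j) by (apply (knot_le a b n hab hn); lia).
  assert (Z := zeros_in_app _ a (x_ (j - 1)) (x_ j) _ _ ltac:(lra) Zleft Zmid).
  assert (Htotal := zeros_K1_le _ (zeros_in_app _ a (x_ j) b _ _ ltac:(lra) Z Zright)).
  lia.
Qed.

Lemma K1_knot_neq_0 j : (1 <= j < n)%nat -> K 1 (x_ j) <> 0.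
Proof.
  intros Hj H0.
  assert (Zleft := K1_zeros_between_knots 0 j ltac:(lia)).
  assert (Zright := K1_zeros_between_knots j n ltac:(lia)).
  rewrite knot_0 in Zleft by assumption; rewrite knot_n in Zright by assumption.
  assert (Hin : a < x_ j < b).
  { assert (H1 := knot_lt a b n hab hn 0 j ltac:(lia)).
    assert (H2 := knot_lt a b n hab hn j n ltac:(lia)).
    rewrite knot_0 in H1 by assumption; rewrite knot_n in H2 by assumption; lra. }
  assert (Htotal := zeros_K1_le _ (zeros_in_app_zero _ _ _ _ _ _ Hin H0 Zleft Zright)).
  lia.
Qed.

Lemma nodes_gt_a i : node i -> a < tau i.
Proof.
  intro Hi; destruct (proj1 (Hnodes i Hi)) as [Hlt | Heq]; [exact Hlt | exfalso].
  assert (Z := K1_zeros_between_knots 0 n ltac:(lia)).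
  rewrite knot_0, knot_n in Z by assumption.
  apply (zeros_K1_lt_of_node_at_a i) in Z; [lia | exact Hi | symmetry; exact Heq].
Qed.

Lemma K5_sign_near_flat_zero c lo hi s : lo <= c <= hi ->
  (forall p, (2 <= p <= 5)%nat -> K p c = 0) ->
  (forall x, lo < x < hi -> x <> c -> 0 < s * K 1 x) ->
  forall x, lo < x < hi -> x <> c -> 0 < s * K 5 x.
Proof.
  intros Hc Hflat Hs x Hx Hxc.
  assert (Hpos : 0 < s * (x - c) ^ 4 * K 5 x).
  { apply (sign_near_flat_zero (fun m => K (S m)) 4 c lo hi s); auto.
    - intros m y _; apply derivable_pt_lim_peano_kernel.
    - intros m Hm; apply Hflat; lia. }
  assert (H4 : 0 < (x - c) ^ 4).
  { replace ((x - c) ^ 4) with (((x - c) * (x - c)) ^ 2) by ring.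
    apply pow_lt, Rsqr_pos_lt; lra. }
  apply Rmult_lt_reg_r with ((x - c) ^ 4); [exact H4 |].
  rewrite Rmult_0_l; replace (s * K 5 x * (x - c) ^ 4) with (s * (x - c) ^ 4 * K 5 x) by ring.
  exact Hpos.
Qed.

Lemma K5_pos_of_point j t0 : (1 <= j <= n)%nat -> x_ (j - 1) < t0 < x_ j -> 0 < K 5 t0 ->
  forall t, x_ (j - 1) < t < x_ j -> 0 < K 5 t.
Proof.
  intro Hj; apply pos_of_no_root; [apply continuity_peano_kernel |].
  intros t Ht; exact (K5_no_root j t Hj Ht).
Qed.

Lemma K5_pos_near_a : exists t0, a < t0 < x_ 1 /\ 0 < K 5 t0.
Proof.
  destruct (finite_lower_bound_gt tau a (S (2 * n)) nodes_gt_a) as [s0 [Hs0 Hgap]].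
  assert (H1 := knot_lt a b n hab hn 0 1 ltac:(lia)); rewrite knot_0 in H1 by assumption.
  set (s := Rmin s0 (x_ 1)).
  assert (Hs : a < s <= x_ 1) by (split; [apply Rmin_glb_lt; lra | apply Rmin_r]).
  exists ((a + s) / 2); split; [lra |].
  rewrite <- (Rmult_1_l (K 5 _)).
  apply (K5_sign_near_flat_zero a a s); [lra | | | lra | lra].
  - intros p Hp; rewrite <- (knot_0 a b n hn); apply peano_kernel_knot; lia.
  - intros x Hx _; rewrite Rmult_1_l, K1_left.
    + apply Rmult_lt_0_compat; [apply pow_lt; lra | lra].
    + intros i Hi; apply Rle_trans with s0; [| exact (Hgap i Hi)].
      assert (s <= s0) by apply Rmin_l; lra.
Qed.

Lemma K5_pos_across_knot j : (1 <= j < n)%nat ->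
  (forall t, x_ (j - 1) < t < x_ j -> 0 < K 5 t) ->
  exists t0, x_ j < t0 < x_ (S j) /\ 0 < K 5 t0.
Proof.
  intros Hj Hpos.
  assert (Hl := knot_lt a b n hab hn (j - 1) j ltac:(lia)).
  assert (Hr := knot_lt a b n hab hn j (S j) ltac:(lia)).
  destruct (continuity_sign_near (K 1) (x_ j) (continuity_peano_kernel 1 (x_ j)))
    as [e [He Hnear]]; [apply K1_knot_neq_0; lia |].
  assert (Hsign : forall x, x_ j - e < x < x_ j + e -> x <> x_ j -> 0 < K 1 (x_ j) * K 5 x).
  { apply K5_sign_near_flat_zero; [lra | intros p Hp; apply peano_kernel_knot; lia |].
    intros x Hx _; apply Hnear, Hx. }
  set (tl := Rmax (x_ j - e / 2) ((x_ (j - 1) + x_ j) / 2)).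
  set (tr := Rmin (x_ j + e / 2) ((x_ j + x_ (S j)) / 2)).
  assert (Htl : x_ (j - 1) < tl < x_ j /\ x_ j - e < tl).
  { assert (x_ j - e / 2 <= tl) by apply Rmax_l.
    assert ((x_ (j - 1) + x_ j) / 2 <= tl) by apply Rmax_r.
    assert (tl < x_ j) by (apply Rmax_lub_lt; lra); lra. }
  assert (Htr : x_ j < tr < x_ (S j) /\ tr < x_ j + e).
  { assert (tr <= x_ j + e / 2) by apply Rmin_l.
    assert (tr <= (x_ j + x_ (S j)) / 2) by apply Rmin_r.
    assert (x_ j < tr) by (apply Rmin_glb_lt; lra); lra. }
  assert (HK1 : 0 < K 1 (x_ j)).
  { assert (0 < K 5 tl) by (apply Hpos; lra).
    assert (0 < K 1 (x_ j) * K 5 tl) by (apply Hsign; lra).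
    nra. }
  exists tr; split; [lra |].
  assert (0 < K 1 (x_ j) * K 5 tr) by (apply Hsign; lra).
  nra.
Qed.

Lemma K5_pos_interval j : (1 <= j <= n)%nat -> forall t, x_ (j - 1) < t < x_ j -> 0 < K 5 t.
Proof.
  induction j as [| j IH]; intro Hj; [lia |].
  destruct (Nat.eq_dec j 0) as [-> | Hj0].
  - destruct K5_pos_near_a as [t0 [Ht0 Hpos]].
    apply (K5_pos_of_point 1 t0 Hj); [simpl; rewrite knot_0 by assumption; exact Ht0 | exact Hpos].
  - destruct (K5_pos_across_knot j ltac:(lia) (IH ltac:(lia))) as [t0 [Ht0 Hpos]].
    apply (K5_pos_of_point (S j) t0 Hj); [replace (S j - 1)%nat with j by lia; exact Ht0 | exact Hpos].
Qed.

Lemma K5_nonneg t : a <= t <= b -> 0 <= K 5 t.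
Proof.
  intro Ht; destruct (knot_cover a b n hn t Ht) as [j [Hj [[Hl | Hl] [Hr | Hr]]]].
  - apply Rlt_le, (K5_pos_interval j Hj); lra.
  - rewrite Hr, peano_kernel_knot by lia; lra.
  - rewrite <- Hl, peano_kernel_knot by lia; lra.
  - rewrite <- Hl, peano_kernel_knot by lia; lra.
Qed.

Lemma is_RInt_K5 : is_RInt (K 5) a b ((b - a) ^ 7 / 5040 - / 720 * Q (fun x => (x - a) ^ 6)).
Proof.
  assert (I1 : is_RInt (fun t => (b - t) ^ 6 / INR (fact 6)) a b ((b - a) ^ 7 / INR (fact 7))).
  { replace ((b - a) ^ 7 / INR (fact 7))
      with (- ((b - b) ^ 7 / INR (fact 7)) - - ((b - a) ^ 7 / INR (fact 7))) by (simpl; field).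
    apply (is_RInt_FTC (fun t => - ((b - t) ^ 7 / INR (fact 7)))).
    - intro t; replace ((b - t) ^ 6 / INR (fact 6)) with (- - ((b - t) ^ 6 / INR (fact 6))) by ring.
      apply (derivable_pt_lim_opp (fun t => (b - t) ^ 7 / INR (fact 7))), derivable_pt_lim_pow_fact.
    - intro t; apply continuity_pt_div; [apply continuity_pow_comp, continuity_const_sub
        | apply continuity_pt_const; intros ? ?; reflexivity | apply INR_fact_neq_0]. }
  assert (I2 : is_RInt (fun t => Q (fun x => tpow 5 (x - t))) a b (Q (fun x => / 6 * (x - a) ^ 6))).
  { apply (is_RInt_quad_sum _ _ _ (fun x t => tpow 5 (x - t))).
    intros i Hi; replace (/ 6 * (tau i - a) ^ 6) with ((tau i - a) ^ 6 / INR 6) by (simpl; field).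
    apply (is_RInt_tpow_const_sub 4), Hnodes, Hi. }
  rewrite quad_sum_scal in I2.
  apply (is_RInt_ext (fun t => (b - t) ^ 6 / INR (fact 6) - / 120 * Q (fun x => tpow 5 (x - t)))).
  - intros t _; unfold peano_kernel; simpl; field.
  - replace ((b - a) ^ 7 / 5040 - / 720 * Q (fun x => (x - a) ^ 6))
      with ((b - a) ^ 7 / INR (fact 7) - / 120 * (/ 6 * Q (fun x => (x - a) ^ 6))) by (simpl; field).
    exact (is_RInt_minus _ _ _ _ _ _ I1 (is_RInt_scal _ _ _ _ _ I2)).
Qed.

Lemma integral_K5_pos : 0 < (b - a) ^ 7 / 5040 - / 720 * Q (fun x => (x - a) ^ 6).
Proof.
  rewrite <- (is_RInt_unique _ _ _ _ is_RInt_K5).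
  assert (H1 := knot_lt a b n hab hn 0 1 ltac:(lia)); rewrite knot_0 in H1 by assumption.
  assert (H2 := knot_le a b n hab hn 1 n hn); rewrite knot_n in H2 by assumption.
  assert (Hex : forall u v, ex_RInt (K 5) u v).
  { intros u v; apply (@ex_RInt_continuous R_CompleteNormedModule); intros.
    apply continuity_pt_filterlim, continuity_peano_kernel. }
  rewrite <- (RInt_Chasles (K 5) a (x_ 1) b (Hex _ _) (Hex _ _)).
  assert (0 < RInt (K 5) a (x_ 1)).
  { apply RInt_gt_0; [exact H1 | |].
    - intros x Hx; apply (K5_pos_interval 1); [lia | simpl; rewrite knot_0 by assumption; exact Hx].
    - intros x _; apply continuity_pt_filterlim, continuity_peano_kernel. }
  assert (0 <= RInt (K 5) (x_ 1) b).
  { apply RInt_ge_0; [exact H2 | apply Hex |]; intros x Hx; apply K5_nonneg; lra. }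
  change (plus ?u ?v) with (u + v); lra.
Qed.

Section PeanoRepresentation.

Variable d : nat -> R -> R.
Hypothesis Hd : forall k x, (k < 6)%nat -> derivable_pt_lim (d k) x (d (S k) x).
Hypothesis Hd6 : continuity (d 6%nat).

Let Hd5 : forall i x, (i <= 5)%nat -> derivable_pt_lim (d i) x (d (S i) x).
Proof. intros; apply Hd; lia. Qed.

Lemma is_RInt_tpow5_d6 c : a <= c <= b ->
  is_RInt (fun s => tpow 5 (c - s) * d 6%nat s) a b
    (120 * (d 0%nat c - (d 0%nat a + taylor_tail (fun i => d (S i)) 4 c a)) + 0).
Proof.
  intro Hc.
  assert (I1 : is_RInt (fun s => tpow 5 (c - s) * d 6%nat s) a c
                 (120 * (d 0%nat c - (d 0%nat a + taylor_tail (fun i => d (S i)) 4 c a)))).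
  { apply (is_RInt_ext (fun s => 120 * (d 6%nat s * (c - s) ^ 5 / INR (fact 5)))).
    - intros x Hx; rewrite Rmin_left, Rmax_right in Hx by lra.
      rewrite tpow_id by lra; simpl; field.
    - exact (is_RInt_scal _ _ _ _ _ (is_RInt_taylor_remainder d 4 Hd5 Hd6 a c)). }
  assert (I2 : is_RInt (fun s => tpow 5 (c - s) * d 6%nat s) c b 0).
  { apply (is_RInt_ext (fun _ => 0)).
    - intros x Hx; rewrite Rmin_left, Rmax_right in Hx by lra.
      rewrite tpow_0 by (lia || lra); rewrite Rmult_0_l; reflexivity.
    - assert (I0 := @is_RInt_const R_NormedModule c b 0).
      change (scal (b - c) 0) with ((b - c) * 0) in I0; rewrite Rmult_0_r in I0; exact I0. }
  exact (is_RInt_Chasles _ _ _ _ _ _ I1 I2).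
Qed.

Lemma is_RInt_K5_d6 : is_RInt (fun s => K 5 s * d 6%nat s) a b (RInt (d 0%nat) a b - Q (d 0%nat)).
Proof.
  set (P := fun x => d 0%nat a + taylor_tail (fun i => d (S i)) 4 x a).
  assert (Iprim := is_RInt_taylor_primitive d 4 Hd5 Hd6 a b).
  assert (I0 : is_RInt (d 0%nat) a b (RInt (d 0%nat) a b)).
  { apply (@RInt_correct R_CompleteNormedModule), (@ex_RInt_continuous R_CompleteNormedModule).
    intros z _; apply continuity_pt_filterlim, derivable_continuous_pt.
    exists (d 1%nat z); apply Hd; lia. }
  assert (Inodes : is_RInt (fun s => Q (fun x => tpow 5 (x - s) * d 6%nat s)) a b
                     (Q (fun x => 120 * (d 0%nat x - P x) + 0))).
  { apply (is_RInt_quad_sum _ _ _ (fun x s => tpow 5 (x - s) * d 6%nat s)).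
    intros i Hi; apply is_RInt_tpow5_d6, Hnodes, Hi. }
  assert (EQ : Q (fun x => 120 * (d 0%nat x - P x) + 0) = 120 * (Q (d 0%nat) - Q P)).
  { rewrite (quad_sum_ext _ _ _ _ (fun x => 120 * d 0%nat x + -120 * P x)) by (intros; ring).
    rewrite quad_sum_plus, !quad_sum_scal; ring. }
  assert (EP : Q P = taylor_tail d 5 b a).
  { apply quad_sum_taylor_poly; intros; apply Hmoment; lia. }
  rewrite EQ, EP in Inodes.
  apply (is_RInt_ext (fun s => ((d 6%nat s * (b - s) ^ 6 / INR (fact 6) - d 0%nat s) + d 0%nat s)
                               + - / 120 * Q (fun x => tpow 5 (x - s) * d 6%nat s))).
  - intros s _.
    rewrite (quad_sum_ext _ _ _ _ (fun x => d 6%nat s * tpow 5 (x - s))) by (intros; ring).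
    rewrite quad_sum_scal; unfold peano_kernel; simpl; field.
  - replace (RInt (d 0%nat) a b - Q (d 0%nat))
      with ((- taylor_tail d 5 b a + RInt (d 0%nat) a b)
            + - / 120 * (120 * (Q (d 0%nat) - taylor_tail d 5 b a))) by field.
    exact (is_RInt_plus _ _ _ _ _ _ (is_RInt_plus _ _ _ _ _ _ Iprim I0) (is_RInt_scal _ _ _ _ _ Inodes)).
Qed.

End PeanoRepresentation.

End PeanoKernel.

Lemma gauss_rule_RInt a b n tau w g : gauss_rule_S51 a b n tau w -> in_S51 a b n g ->
  RInt g a b = quad_sum (S (2 * n)) tau w g.
Proof.
  intros [_ [_ [_ Hex]]] Hg; destruct (Hex g Hg) as [pr E].
  rewrite (RInt_Reals g a b pr), E, Nat.add_1_r; reflexivity.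
Qed.

Lemma gauss_rule_moment a b n tau w p : gauss_rule_S51 a b n tau w -> (p <= 5)%nat ->
  quad_sum (S (2 * n)) tau w (fun x => (x - a) ^ p) = (b - a) ^ S p / INR (S p).
Proof.
  intros HG Hp; rewrite <- (gauss_rule_RInt a b n tau w _ HG (in_S51_poly a b n p a Hp)).
  apply is_RInt_unique.
  replace ((b - a) ^ S p / INR (S p)) with ((b - a) ^ S p / INR (S p) - (a - a) ^ S p / INR (S p))
    by (rewrite Rminus_diag, pow_i by lia; unfold Rdiv; ring).
  apply (is_RInt_FTC (fun x => (x - a) ^ S p / INR (S p))).
  - intro x; apply is_derive_Reals; auto_derive; [exact I |].
    change (match p with 0%nat => 1 | S _ => INR p + 1 end) with (INR (S p)).
    unfold Rminus; field; apply not_0_INR; lia.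
  - apply continuity_pow_comp, continuity_sub_const.
Qed.

Lemma gauss_rule_knot a b n tau w j p : a < b -> (1 <= n)%nat -> gauss_rule_S51 a b n tau w ->
  (j <= n)%nat -> (2 <= p <= 5)%nat ->
  quad_sum (S (2 * n)) tau w (fun x => tpow p (x - knot a b n j))
  = (b - knot a b n j) ^ S p / INR (S p).
Proof.
  intros hab hn HG Hj Hp; destruct p as [| [| m]]; [lia | lia |].
  rewrite <- (gauss_rule_RInt a b n tau w _ HG (in_S51_tpow a b n hab hn m j ltac:(lia) Hj)).
  apply is_RInt_unique, is_RInt_tpow_sub_const, knot_bounds; assumption.
Qed.

Theorem theorem2 (a b : R) (n : nat) (tau w : nat -> R) :
  a < b -> (1 <= n)%nat ->
  gauss_rule_S51 a b n tau w ->
  0 < c_err a b n tau w /\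
  forall (f : R -> R) (d : nat -> R -> R),
    Cm_derivs 6 f d ->
    exists xi, a <= xi <= b /\
      integral_is f a b (quad_sum (2 * n + 1) tau w f + c_err a b n tau w * d 6%nat xi).
Proof.
  intros hab hn HG.
  assert (Hnodes : forall i, (1 <= i <= S (2 * n))%nat -> a <= tau i <= b)
    by (intros i Hi; apply (proj1 HG); lia).
  pose proof (fun p => gauss_rule_moment a b n tau w p HG) as Hmoment.
  pose proof (fun j p => gauss_rule_knot a b n tau w j p hab hn HG) as Hknot.
  assert (Hc := integral_K5_pos a b n tau w hab hn Hnodes Hmoment Hknot).
  unfold c_err; rewrite Nat.add_1_r; split; [exact Hc |].
  intros f d [Hd0 [Hd Hd6]].
  destruct (integral_mean_value _ _ a b _ _ hab (continuity_peano_kernel b n tau w 5) Hd6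
              (K5_nonneg a b n tau w hab hn Hnodes Hmoment Hknot)
              (is_RInt_K5 a b n tau w Hnodes) Hc
              (is_RInt_K5_d6 a b n tau w hn Hnodes Hmoment d Hd Hd6)) as [xi [Hxi Hmv]].
  exists xi; split; [exact Hxi |].
  assert (Hf : forall x, continuity_pt f x).
  { intro x; apply continuity_pt_ext with (d 0%nat); [exact Hd0 |].
    apply derivable_continuous_pt; exists (d 1%nat x); apply Hd; lia. }
  exists (RiemannInt_P6 hab (fun x _ => Hf x)); rewrite <- RInt_Reals.
  rewrite (RInt_ext f (d 0%nat)) by (intros; symmetry; apply Hd0).
  rewrite (quad_sum_ext _ _ _ f (d 0%nat)) by (intros; symmetry; apply Hd0).
  lra.
Qed.
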